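(* Let $(V,\mu)$ be an infinite, connected, locally finite weighted graph and let $\Omega\subset V$ be a connected subset. Assume that either $\Omega\neq V$ or $(V,\mu)$ is non-parabolic. Let $\sigma\in\ell^+(\Omega)$, $\sigma\not\equiv 0$, and let $1<q<\infty$. Then the following are equivalent: (I) the Dirichlet problem $-\Delta u\ge \sigma u^q$ in $\Omega$, $u=0$ on $\partial\Omega$ (when $\Omega=V$: simply $-\Delta u\ge\sigma u^q$ in $V$) admits a positive solution, i.e. a function $u$ with $u(x)>0$ for all $x\in\Omega$; (II) the integral inequality $u(x)\ge G_\Omega(\sigma u^q)(x)$ for all $x\in\Omega$ admits a positive solution $u$ on $\Omega$; (III) for some, equivalently for all, $o\in\Omega$ with $\sigma(o)>0$, there is a constant $C>0$ such that for all $x\in\Omega$, $$G_\Omega\big(\sigma\, g_\Omega(o,\cdot)^q\big)(x)\le C\, g_\Omega(o,x)<\infty .$$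
   Context: A weighted graph $(V,E,\mu)$: $V$ is a countable vertex set, $\mu:V\times V\to[0,\infty)$ is symmetric, $\mu_{xy}>0$ iff $x\sim y$ (i.e. $\{x,y\}\in E$); locally finite means each vertex has finitely many neighbours; $\mu(x)=\sum_{y\sim x}\mu_{xy}$. The Laplacian is $\Delta u(x)=\frac{1}{\mu(x)}\sum_{y\sim x}\mu_{xy}(u(y)-u(x))$. $\ell(\Omega)$ denotes real functions on $\Omega$, $\ell^+(\Omega)$ nonnegative ones; functions on $\Omega$ are extended by zero outside $\Omega$. $\partial\Omega=\{y\in V\setminus\Omega:\ \exists x\in\Omega,\ x\sim y\}$. The random walk $(X_n)$ has transition probabilities $P(x,y)=\mu_{xy}/\mu(x)$; $\tau_\Omega=\min\{n\ge0: X_n\notin\Omega\}$; $P^\Omega_n(x,y)=\mathbb P_x[X_n=y,\ n<\tau_\Omega]$. The Dirichlet Green function is $g_\Omega(x,y)=\sum_{n\ge0}P_n^\Omega(x,y)/\mu(y)$ for $x,y\in\Omega$ (symmetric), $g=g_V$, and the Green operator is $G_\Omega f(x)=\sum_{y\in\Omega}g_\Omega(x,y)f(y)\mu(y)$. The graph is parabolic if every nonnegative superharmonic function is constant, and non-parabolic otherwise (equivalently $g(x,y)<\infty$). Under the stated assumptions $g_\Omega(x,y)<\infty$ for all $x,y\in\Omega$. *)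

From HB Require Import structures.
From mathcomp Require Import all_boot all_order all_algebra.
From mathcomp Require Import all_classical all_reals.
From mathcomp Require Import ereal topology normedtype sequences esum exp.
Set Implicit Arguments. Unset Strict Implicit. Unset Printing Implicit Defensive.
Import Order.TTheory GRing.Theory Num.Theory.
Local Open Scope classical_set_scope.
Local Open Scope ring_scope.

Section WeightedGraph.
Variables (R : realType) (V : countType) (mu : V -> V -> R).

Definition nbrs (x : V) : set V := [set y | 0 < mu x y].

Definition weighted_graph : Prop :=
  (forall x y, 0 <= mu x y) /\ (forall x y, mu x y = mu y x).

Definition locally_finite : Prop := forall x, finite_set (nbrs x).

Definition muv (x : V) : R := \sum_(y \in nbrs x) mu x y.

Definition laplacian (u : V -> R) (x : V) : R :=
  (muv x)^-1 * \sum_(y \in nbrs x) mu x y * (u y - u x).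

Inductive reach (A : set V) : V -> V -> Prop :=
  | reach0 x : A x -> reach A x x
  | reachS x y z : A x -> 0 < mu x y -> reach A y z -> reach A x z.

Definition connected_set (A : set V) : Prop :=
  forall x y, A x -> A y -> reach A x y.

Definition bdry (Omega : set V) : set V :=
  [set y | ~ Omega y /\ exists2 x, Omega x & 0 < mu x y].

Definition parabolic : Prop :=
  forall u : V -> R, (forall x, 0 <= u x) -> (forall x, laplacian u x <= 0) ->
    forall x y, u x = u y.

(* P^Omega_n(x,y) = P_x[X_n = y, n < tau_Omega] for the random walk with
   transition probabilities P(x,y) = mu_xy / mu(x); computed by the
   Markov (first-step) recursion over paths staying in Omega. *)
Fixpoint killedP (Omega : set V) (n : nat) (x y : V) : R :=
  match n with
  | 0%N => if (x == y) && `[< Omega x >] then 1 else 0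
  | m.+1 => if `[< Omega x >] then
              \sum_(z \in nbrs x) (mu x z / muv x) * killedP Omega m z y
            else 0
  end.

Definition green (Omega : set V) (x y : V) : \bar R :=
  (\sum_(0 <= n <oo) ((killedP Omega n x y) / muv y)%:E)%E.

Definition green_op (Omega : set V) (f : V -> \bar R) (x : V) : \bar R :=
  (\esum_(y in Omega) (green Omega x y * (f y * (muv y)%:E)))%E.

End WeightedGraph.

From HB Require Import structures.
From mathcomp Require Import all_boot all_order all_algebra.
From mathcomp Require Import all_classical all_reals.
From mathcomp Require Import ereal topology normedtype sequences esum exp.
From mathcomp Require Import ring lra finmap.
Import Order.TTheory GRing.Theory Num.Theory.
Local Open Scope classical_set_scope.
Local Open Scope ring_scope.

Set Implicit Arguments. Unset Strict Implicit.

(* The Green operator [G f] of the walk killed outside [Omega] is the least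
   nonnegative supersolution of [- laplacian w >= f] vanishing off [Omega], and
   is itself one when it is finite; this gives (I) <-> (II).  A solution [w] of
   (I) dominates [a * g(o, .)] with [a = sigma(o) w(o)^q mu(o)], so [g(o, .)] is
   finite.  With the concave increasing [psi(t) = 1 - (1 + t/a)^(1-q) <= 1], the
   transform [v = h psi(w/h)] of [w] by the superharmonic [h = g(o, .)]
   satisfies [- laplacian v >= c sigma h^q], and minimality gives
   [G(sigma h^q) <= v/c <= h/c]: this is (III), for every [o] with
   [sigma(o) > 0].  Conversely, under (III) a multiple of [g(o, .)] solves (II). *)

Section PsiTransform.
Variable R : realType.
Implicit Types (q a h s t w A B F X Y rho : R).

(* [rho / rho `^ q] is [rho ^ (1 - q)], a convex function of [rho > 0]: the
   next two lemmas are its tangent lines at [1] and at [B]. *)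
Lemma tangent1_le_pow1B q rho : 1 <= q -> 0 < rho ->
  1 + (1 - q) * (rho - 1) <= rho / rho `^ q.
Proof.
move=> q1 rho0.
have -> : rho / rho `^ q = expR ((1 - q) * ln rho).
  by rewrite /powR gt_eqF // -{1}(lnK rho0) -expRB; congr expR; ring.
have lnrho : 1 + ln rho <= rho by rewrite -{2}(lnK rho0); exact: expR_ge1Dx.
by apply: le_trans (expR_ge1Dx _); nra.
Qed.

Lemma tangent_le_pow1B q A B : 1 <= q -> 0 < A -> 0 < B ->
  B / B `^ q + (1 - q) * (A - B) / B `^ q <= A / A `^ q.
Proof.
move=> q1 A0 B0.
have Bq : 0 < B `^ q by rewrite powR_gt0.
have AB0 : 0 < A / B by rewrite divr_gt0.
have ABq : 0 < (A / B) `^ q by rewrite powR_gt0.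
have Aq : A `^ q = (A / B) `^ q * B `^ q by rewrite -powRM ?ltW // divfK ?gt_eqF.
have -> : A / A `^ q = (A / B) / (A / B) `^ q * (B / B `^ q).
  by rewrite Aq; field; rewrite !gt_eqF.
have -> : B / B `^ q + (1 - q) * (A - B) / B `^ q =
    (1 + (1 - q) * (A / B - 1)) * (B / B `^ q).
  by field; rewrite !gt_eqF.
by rewrite ler_wpM2r ?tangent1_le_pow1B // divr_ge0 // ltW.
Qed.

Definition psi q a X := 1 - (1 + X / a) / (1 + X / a) `^ q.
Definition dpsi q a Y := (q - 1) / a / (1 + Y / a) `^ q.

Section Psi.
Variables (q a : R).
Hypotheses (q1 : 1 <= q) (a0 : 0 < a).
Let q0 : 0 <= q := le_trans ler01 q1.

Lemma psi_shift_gt0 X : 0 <= X -> 0 < 1 + X / a.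
Proof. by move=> X0; rewrite ltr_wpDr // divr_ge0 // ltW. Qed.

Lemma psi_concave X Y : 0 <= X -> 0 <= Y ->
  psi q a X <= psi q a Y + dpsi q a Y * (X - Y).
Proof.
move=> X0 Y0.
have := tangent_le_pow1B q1 (psi_shift_gt0 X0) (psi_shift_gt0 Y0).
have Bq : 0 < (1 + Y / a) `^ q by rewrite powR_gt0 ?psi_shift_gt0.
rewrite /psi /dpsi; set A := 1 + X / a; set B := 1 + Y / a.
have -> : (1 - q) * (A - B) / B `^ q = - ((q - 1) / a / B `^ q * (X - Y)).
  by rewrite /A /B; field; rewrite !gt_eqF.
lra.
Qed.

Lemma psi0 : psi q a 0 = 0.
Proof. by rewrite /psi mul0r addr0 powR1 divr1 subrr. Qed.

Lemma dpsi_ge0 Y : 0 <= Y -> 0 <= dpsi q a Y.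
Proof.
move=> Y0; apply: divr_ge0; last exact: powR_ge0.
by apply: divr_ge0; [rewrite subr_ge0 | exact: ltW].
Qed.

Lemma psi_ge0 X : 0 <= X -> 0 <= psi q a X.
Proof.
move=> X0; have := psi_concave (lexx 0) X0; rewrite psi0.
have := dpsi_ge0 X0; nra.
Qed.

Lemma psi_le1 X : 0 <= X -> psi q a X <= 1.
Proof.
move=> X0; rewrite /psi lerBlDr lerDl divr_ge0 ?powR_ge0 //.
exact: ltW (psi_shift_gt0 X0).
Qed.

Lemma psi_nondecreasing X Y : 0 <= X -> X <= Y -> psi q a X <= psi q a Y.
Proof.
move=> X0 XY; have Y0 : 0 <= Y by apply: le_trans XY.
have := psi_concave X0 Y0.
have : dpsi q a Y * (X - Y) <= 0 by rewrite mulr_ge0_le0 ?dpsi_ge0 ?subr_le0.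
lra.
Qed.

Lemma dpsi_nonincreasing X Y : 0 <= X -> X <= Y -> dpsi q a Y <= dpsi q a X.
Proof.
move=> X0 XY; have Y0 : 0 <= Y by apply: le_trans XY.
rewrite /dpsi ler_wpM2l //; first by apply: divr_ge0; [rewrite subr_ge0 | exact: ltW].
rewrite lef_pV2 ?posrE ?powR_gt0 ?psi_shift_gt0 //.
apply: ge0_ler_powR; rewrite ?nnegrE.
- exact: q0.
- exact: ltW (psi_shift_gt0 X0).
- exact: ltW (psi_shift_gt0 Y0).
- by rewrite lerD2l ler_pM2r ?invr_gt0.
Qed.

Lemma psi_increment s F t : 0 <= s -> 0 <= F -> s + F <= t ->
  psi q a s + dpsi q a t * F <= psi q a t.
Proof.
move=> s0 F0 sFt; have sF0 : 0 <= s + F by rewrite addr_ge0.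
have := psi_concave s0 sF0; have := psi_nondecreasing sF0 sFt.
have : dpsi q a t * F <= dpsi q a (s + F) * F.
  by rewrite ler_wpM2r // dpsi_nonincreasing.
lra.
Qed.

(* Jensen's inequality for the perspective [(h, w) |-> h * psi (w / h)] of the
   concave [psi], with subprobability weights [p z * hz z / h]. *)
Lemma psi_jensen (I : Type) (s : seq I) (p hz wz : I -> R) h :
  0 < h -> (forall z, 0 <= p z) -> (forall z, 0 <= hz z) -> (forall z, 0 <= wz z) ->
  \sum_(z <- s) p z * hz z <= h ->
  \sum_(z <- s) p z * (hz z * psi q a (wz z / hz z)) <=
    h * psi q a ((\sum_(z <- s) p z * wz z) / h).
Proof.
move=> h0 p0 hz0 wz0 Qh.
set S := \sum_(z <- s) p z * wz z; set Q := \sum_(z <- s) p z * hz z.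
set m := S / h.
have S0 : 0 <= S by apply: sumr_ge0 => z _; rewrite mulr_ge0.
have m0 : 0 <= m by rewrite divr_ge0 // ltW.
have tangent_sum : \sum_(z <- s) p z * (hz z * psi q a (wz z / hz z)) <=
    Q * psi q a m + dpsi q a m * (S - Q * m).
  have -> : Q * psi q a m + dpsi q a m * (S - Q * m) =
      \sum_(z <- s) (p z * hz z * psi q a m + dpsi q a m * (p z * wz z - p z * hz z * m)).
    by rewrite big_split /= -mulr_suml -mulr_sumr sumrB -mulr_suml.
  apply: ler_sum => z _.
  have [->|hzp] := eqVneq (hz z) 0.
    rewrite !mulr0 !mul0r mulr0 add0r subr0.
    by apply: mulr_ge0; [exact: dpsi_ge0 | rewrite mulr_ge0].
  have hz_gt0 : 0 < hz z by rewrite lt_def hzp hz0.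
  have := psi_concave (divr_ge0 (wz0 z) (hz0 z)) m0.
  have -> : p z * wz z = p z * hz z * (wz z / hz z) by field; rewrite gt_eqF.
  have phz0 : 0 <= p z * hz z by rewrite mulr_ge0.
  move: (wz z / hz z) => r T.
  by have := ler_wpM2l phz0 T; rewrite mulrA; lra.
have := psi_concave (lexx 0) m0; rewrite psi0 => T0.
have : 0 <= (h - Q) * (psi q a m - m * dpsi q a m) by rewrite mulr_ge0 ?subr_ge0 //; lra.
have ES : S = h * m by rewrite /m mulrC divfK // gt_eqF.
rewrite ES in tangent_sum; lra.
Qed.

Lemma dpsi_powR_lower h w : 0 < h -> a * h <= w ->
  (q - 1) / a * (a / 2) `^ q * h `^ q <= dpsi q a (w / h) * w `^ q.
Proof.
move=> h0 ahw; set t := w / h.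
have ta : a <= t by rewrite /t ler_pdivlMr.
have t0 : 0 <= t by apply: le_trans ta; exact: ltW.
have B0 := psi_shift_gt0 t0.
have Bt : 1 + t / a <= 2 * t / a.
  by rewrite ler_pdivlMr // mulrDl mul1r divfK ?gt_eqF //; lra.
have Bq : (1 + t / a) `^ q <= (2 * t / a) `^ q.
  by apply: ge0_ler_powR; rewrite ?nnegrE ?(ltW B0) ?(le_trans (ltW B0) Bt).
have n1 : 0 <= 2 * t / a by apply: divr_ge0; [apply: mulr_ge0 | apply: ltW].
have n2 : 0 <= a / 2 by rewrite divr_ge0 // ltW.
have -> : w `^ q = (2 * t / a) `^ q * ((a / 2) `^ q * h `^ q).
  have Ew : 2 * t / a * (a / 2 * h) = w by rewrite /t; field; rewrite !gt_eqF.
  have h0' : 0 <= h := ltW h0.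
  by rewrite -[X in X `^ q = _]Ew (powRM q n1 (mulr_ge0 n2 h0')) (powRM q n2 h0').
have Bq0 : 0 < (1 + t / a) `^ q by rewrite powR_gt0.
rewrite /dpsi.
set k := (q - 1) / a; set X := (a / 2) `^ q * h `^ q.
have k0 : 0 <= k by apply: divr_ge0; [rewrite subr_ge0 | exact: ltW].
have kX0 : 0 <= k * X by rewrite mulr_ge0 // mulr_ge0 ?powR_ge0.
have -> : k * (a / 2) `^ q * h `^ q = k * X by rewrite /X mulrA.
have -> : k / (1 + t / a) `^ q * ((2 * t / a) `^ q * X) =
    k * X * ((2 * t / a) `^ q / (1 + t / a) `^ q) by field; rewrite gt_eqF.
by apply: ler_peMr => //; rewrite ler_pdivlMr // mul1r.
Qed.

(* In graph terms: if [h] is superharmonic and [w >= a h] solves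
   [w >= sg w^q + P w], then [v = h psi(w/h)] solves [v >= c sg h^q + P v]. *)
Lemma psi_supersolution (I : Type) (s : seq I) (p hz wz : I -> R) h w sg :
  0 < h -> a * h <= w ->
  (forall z, 0 <= p z) -> (forall z, 0 <= hz z) -> (forall z, a * hz z <= wz z) ->
  \sum_(z <- s) p z * hz z <= h -> 0 <= sg ->
  sg * w `^ q + \sum_(z <- s) p z * wz z <= w ->
  (q - 1) / a * (a / 2) `^ q * sg * h `^ q +
    \sum_(z <- s) p z * (hz z * psi q a (wz z / hz z)) <= h * psi q a (w / h).
Proof.
move=> h0 ahw p0 hz0 awz Qh sg0 Hw.
have wz0 z : 0 <= wz z by apply: le_trans (awz z); exact: mulr_ge0 (ltW a0) (hz0 z).
set S := \sum_(z <- s) p z * wz z.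
have S0 : 0 <= S by apply: sumr_ge0 => z _; rewrite mulr_ge0.
have J := psi_jensen h0 p0 hz0 wz0 Qh; rewrite -/S in J.
have F0 : 0 <= sg * w `^ q / h by rewrite divr_ge0 ?mulr_ge0 ?powR_ge0 // ltW.
have sFt : S / h + sg * w `^ q / h <= w / h.
  by rewrite -mulrDl ler_pM2r ?invr_gt0 //; move: Hw; rewrite -/S; lra.
have C := psi_increment (divr_ge0 S0 (ltW h0)) F0 sFt.
have C2 : h * psi q a (S / h) + dpsi q a (w / h) * (sg * w `^ q) <= h * psi q a (w / h).
  move: (ler_wpM2l (ltW h0) C); rewrite mulrDr.
  by rewrite mulrCA [_ * (_ / h)]mulrC divfK ?gt_eqF // mulrCA.
have D := dpsi_powR_lower h0 ahw.
have D2 : (q - 1) / a * (a / 2) `^ q * sg * h `^ q <= dpsi q a (w / h) * (sg * w `^ q).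
  have -> : (q - 1) / a * (a / 2) `^ q * sg * h `^ q =
    sg * ((q - 1) / a * (a / 2) `^ q * h `^ q) by ring.
  by rewrite [X in _ <= X]mulrCA; apply: ler_wpM2l.
lra.
Qed.

End Psi.
End PsiTransform.

Lemma sum_pred1_seq (R : realType) (V : eqType) (s : seq V) (F : V -> R) y : uniq s ->
  \sum_(z <- s) (if z == y then F z else 0) = if y \in s then F y else 0.
Proof.
move=> us; case: ifP => ys.
  by rewrite (bigD1_seq y) //= eqxx big1 ?addr0 // => z /negbTE ->.
by rewrite big_seq; apply: big1 => z zs; case: eqP => // zy; move: ys; rewrite -zy zs.
Qed.

Lemma nneseries_le_ub (R : realType) (u : nat -> \bar R) (M : \bar R) :
  (forall n, (0 <= u n)%E) -> (forall N, (\sum_(0 <= n < N) u n <= M)%E) ->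
  (\sum_(0 <= n <oo) u n <= M)%E.
Proof.
move=> u0 uM.
have := ereal_nondecreasing_series (u_ := u) (P := xpredT) (N := 0%N) (fun n _ _ => u0 n).
move/ereal_nondecreasing_cvgn/cvg_lim => -> //.
by apply: ge_ereal_sup => _ [N _ <-]; exact: uM.
Qed.

Section KilledWalk.
Variables (R : realType) (V : countType) (mu : V -> V -> R) (Omega : set V).
Hypotheses (mu_ge0 : forall x y, 0 <= mu x y) (mu_sym : forall x y, mu x y = mu y x).
Hypotheses (mu_lf : locally_finite mu) (muv_gt0 : forall x, 0 < muv mu x).

Local Notation PO := (killedP mu Omega).

Definition nbrs_fset x : {fset V} := fset_set (nbrs mu x).

Lemma mem_nbrs_fset x y : (y \in nbrs_fset x) = (0 < mu x y).
Proof.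
rewrite /nbrs_fset in_fset_set; last exact: mu_lf.
by apply/idP/idP => [/set_mem|/mem_set].
Qed.

Lemma fsbig_nbrs x (F : V -> R) : \sum_(y \in nbrs mu x) F y = \sum_(y <- nbrs_fset x) F y.
Proof. by rewrite fsbig_finite //; exact: mu_lf. Qed.

Definition P x y := mu x y / muv mu x.

Lemma P_ge0 x y : 0 <= P x y.
Proof. by rewrite /P divr_ge0 // ltW. Qed.

Lemma muv_neq0 x : muv mu x != 0.
Proof. by rewrite gt_eqF. Qed.

Lemma sum_P x : \sum_(z <- nbrs_fset x) P x z = 1.
Proof. by rewrite /P -mulr_suml -fsbig_nbrs divff ?muv_neq0. Qed.

Lemma laplacianE u x :
  laplacian mu u x = \sum_(z <- nbrs_fset x) P x z * u z - u x.
Proof.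
rewrite /laplacian fsbig_nbrs mulr_sumr.
rewrite -[u x in RHS]mul1r -(sum_P x) mulr_suml -sumrB.
by apply: eq_bigr => z _; rewrite /P; field; exact: muv_neq0.
Qed.

Lemma killedP0 x y : PO 0 x y = if (x == y) && `[< Omega x >] then 1 else 0.
Proof. by []. Qed.

Lemma killedPS n x y : PO n.+1 x y =
  if `[< Omega x >] then \sum_(z <- nbrs_fset x) P x z * PO n z y else 0.
Proof. by rewrite /= fsbig_nbrs. Qed.

Lemma killedP_ge0 n x y : 0 <= PO n x y.
Proof.
elim: n x => [|n IH] x; first by rewrite killedP0; case: ifP.
rewrite killedPS; case: ifP => // _; apply: sumr_ge0 => z _.
by rewrite mulr_ge0 ?P_ge0.
Qed.

Lemma killedP_notinl n x y : ~ Omega x -> PO n x y = 0.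
Proof.
move=> Ox; case: n => [|n]; first by rewrite killedP0 (asboolF Ox) andbF.
by rewrite killedPS (asboolF Ox).
Qed.

Lemma killedP_notinr n x y : ~ Omega y -> PO n x y = 0.
Proof.
move=> Oy; elim: n x => [|n IH] x.
  by rewrite killedP0; case: eqP => [->|] //=; rewrite (asboolF Oy).
rewrite killedPS; case: ifP => // _.
by apply: big1 => z _; rewrite IH mulr0.
Qed.

Lemma killedPSr n x y : PO n.+1 x y =
  if `[< Omega y >] then \sum_(z <- nbrs_fset y) PO n x z * P z y else 0.
Proof.
elim: n x y => [|n IH] x y.
  have E1 : \sum_(z <- nbrs_fset x) P x z * PO 0 z y = \sum_(z <- nbrs_fset x)
      (if z == y then if `[< Omega y >] then P x y else 0 else 0).
    apply: eq_bigr => z _; rewrite killedP0; case: eqP => [->|] /=; last by rewrite mulr0.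
    by case: ifP; rewrite ?mulr1 ?mulr0.
  have E2 : \sum_(z <- nbrs_fset y) PO 0 x z * P z y = \sum_(z <- nbrs_fset y)
      (if z == x then if `[< Omega x >] then P x y else 0 else 0).
    apply: eq_bigr => z _; rewrite killedP0 eq_sym; case: eqP => [->|] /=; last by rewrite mul0r.
    by case: ifP; rewrite ?mul1r ?mul0r.
  rewrite killedPS E1 E2 !sum_pred1_seq ?fset_uniq // !mem_nbrs_fset mu_sym.
  by case: (asboolP (Omega x)); case: (asboolP (Omega y)); case: (0 < mu y x).
rewrite killedPS; case: (boolP `[< Omega y >]) => Oy; last first.
  by case: ifP => // _; apply: big1 => w _; rewrite IH (negbTE Oy) mulr0.
case: (boolP `[< Omega x >]) => Ox; last first.
  by apply/esym/big1 => z _; rewrite killedPS (negbTE Ox) mul0r.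
under eq_bigr do rewrite IH Oy mulr_sumr.
rewrite exchange_big; apply: eq_bigr => z _.
by rewrite killedPS Ox mulr_suml; apply: eq_bigr => w _; rewrite mulrA.
Qed.

Lemma killedP_sym n x y : muv mu x * PO n x y = muv mu y * PO n y x.
Proof.
elim: n x y => [|n IH] x y.
  by rewrite !killedP0 eq_sym; case: eqP => [->|] //=; rewrite ?mulr0.
rewrite killedPS killedPSr; case: ifP => _; last by rewrite !mulr0.
rewrite !mulr_sumr; apply: eq_bigr => z _.
have -> : PO n z y = muv mu y * PO n y z / muv mu z.
  by rewrite -IH mulrC mulrA mulVf ?mul1r // muv_neq0.
by rewrite /P mu_sym; field; rewrite !muv_neq0.
Qed.

Lemma reach_killedP_gt0 x y : reach mu Omega x y -> exists n, 0 < PO n x y.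
Proof.
elim => [z Oz|b c d Ob bc _ [n Hn]].
  by exists 0%N; rewrite killedP0 eqxx (asboolT Oz).
exists n.+1; rewrite killedPS (asboolT Ob) (bigD1_seq c) ?fset_uniq ?mem_nbrs_fset //=.
rewrite ltr_wpDr ?mulr_gt0 ?divr_gt0 ?invr_gt0 //.
by apply: sumr_ge0 => z _; rewrite mulr_ge0 ?P_ge0 ?killedP_ge0.
Qed.

Local Open Scope ereal_scope.

Lemma green_ge0 x y : 0 <= green mu Omega x y.
Proof.
apply: nneseries_ge0 => n _ _.
by rewrite lee_fin divr_ge0 ?killedP_ge0 // ltW.
Qed.

Lemma green_mul_muvE x y c : (0 <= c)%R ->
  green mu Omega x y * (c * muv mu y)%:E = \sum_(0 <= n <oo) (PO n x y * c)%:E.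
Proof.
move=> c0; rewrite /green muleC -nneseriesZl; last first.
  by move=> n _; rewrite lee_fin divr_ge0 ?killedP_ge0 // ltW.
apply: congr_lim; apply/funext => N; apply: eq_bigr => n _.
by rewrite -EFinM; congr EFin; field; exact: muv_neq0.
Qed.

Lemma green_sym x y : green mu Omega x y = green mu Omega y x.
Proof.
rewrite /green; apply: congr_lim; apply/funext => N; apply: eq_bigr => n _.
congr EFin; apply: (mulfI (muv_neq0 x)); rewrite mulrA killedP_sym.
by field; rewrite !muv_neq0.
Qed.

Lemma green_notinr x y : ~ Omega y -> green mu Omega x y = 0.
Proof.
move=> Oy; rewrite /green eseries0 // => n _ _.
by rewrite killedP_notinr // mul0r.
Qed.

Lemma green_gt0 x y : reach mu Omega x y -> 0 < green mu Omega x y.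
Proof.
move=> /reach_killedP_gt0 [n PO_gt0]; rewrite /green.
apply: (lt_le_trans _ (nneseries_lim_ge (m := 0%N) n.+1 _)); last first.
  by move=> k _ _; rewrite lee_fin divr_ge0 ?killedP_ge0 // ltW.
rewrite big_nat_recr //=; apply: (lt_le_trans _ (leeDr _ _)).
  by rewrite lte_fin divr_gt0.
by rewrite sume_ge0 // => k _; rewrite lee_fin divr_ge0 ?killedP_ge0 // ltW.
Qed.

Local Close Scope ereal_scope.

Definition G (f : V -> R) x := green_op mu Omega (fun y => (f y)%:E) x.

(* [G f x] is the supremum of these truncations to [N] steps of the walk and
   to targets in [A] ([Gtrunc_le_G], [G_le_ub]); this reduces every statement
   about [G] to finite sums. *)
Definition Gtrunc (f : V -> R) N (A : {fset V}) x : R :=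
  \sum_(n < N) \sum_(y <- A) PO n x y * f y.

Definition supersolution (f w : V -> R) := forall x, Omega x ->
  f x + \sum_(z <- nbrs_fset x) P x z * w z <= w x.

Definition Gfine (f : V -> R) z : R := if `[< Omega z >] then fine (G f z) else 0.

Section NonnegativeSource.
Variable f : V -> R.
Hypothesis f_ge0 : forall y, 0 <= f y.

Lemma Gtrunc_le_G N (A : {fset V}) x : (forall y, y \in A -> Omega y) ->
  ((Gtrunc f N A x)%:E <= G f x)%E.
Proof.
move=> AO; apply: esum_ge.
exists [set` A]; first by split; [exact: finite_fset | move=> y /= /AO].
rewrite fsbig_finite ?finite_fset // set_fsetK /Gtrunc exchange_big /= -sumEFin.
apply: lee_sum => y _; rewrite green_mul_muvE //.
apply: le_trans (nneseries_lim_ge (m := 0%N) N _); first by rewrite sumEFin big_mkord.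
by move=> n _ _; rewrite lee_fin mulr_ge0 ?killedP_ge0.
Qed.

Lemma G_le_ub x (M : \bar R) :
  (forall N (A : {fset V}), (forall y, y \in A -> Omega y) -> ((Gtrunc f N A x)%:E <= M)%E) ->
  (G f x <= M)%E.
Proof.
move=> GM; apply: ge_ereal_sup => _ [X [finX XO] <-].
rewrite fsbig_finite //.
under eq_bigr do rewrite green_mul_muvE //.
rewrite -nneseries_sum; last by move=> y n _; rewrite lee_fin mulr_ge0 ?killedP_ge0.
apply: nneseries_le_ub => [n|N].
  by rewrite sume_ge0 // => y _; rewrite lee_fin mulr_ge0 ?killedP_ge0.
rewrite big_mkord; under eq_bigr do rewrite sumEFin.
by rewrite sumEFin; apply: GM => y; rewrite in_fset_set // => /set_mem /XO.
Qed.

Lemma G_ge0 x : (0 <= G f x)%E.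
Proof.
apply: esum_ge0 => y _; rewrite mule_ge0 ?green_ge0 //.
by rewrite lee_fin mulr_ge0 // ltW.
Qed.

Lemma Gtrunc_notin N A x : ~ Omega x -> Gtrunc f N A x = 0.
Proof.
move=> Ox; apply: big1 => n _; apply: big1 => y _.
by rewrite killedP_notinl // mul0r.
Qed.

Lemma GtruncS N A x : Omega x -> Gtrunc f N.+1 A x =
  (if x \in A then f x else 0) + \sum_(z <- nbrs_fset x) P x z * Gtrunc f N A z.
Proof.
move=> Ox; rewrite /Gtrunc big_ord_recl; congr (_ + _).
  rewrite (eq_bigr (fun y => if y == x then f x else 0)); last first.
    move=> y _; rewrite killedP0 eq_sym (asboolT Ox) andbT.
    by case: eqP => [->|]; rewrite ?mul1r ?mul0r.
  by rewrite sum_pred1_seq ?fset_uniq.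
under eq_bigr => n _ do under eq_bigr => y _ do rewrite killedPS (asboolT Ox) mulr_suml.
under eq_bigr => n _ do rewrite exchange_big /=.
rewrite exchange_big /=; apply: eq_bigr => z _.
rewrite mulr_sumr; apply: eq_bigr => n _; rewrite mulr_sumr.
by apply: eq_bigr => y _; rewrite mulrA.
Qed.

Lemma le_Gtrunc N N' (A A' : {fset V}) x :
  (N <= N')%N -> (A `<=` A')%fset -> Gtrunc f N A x <= Gtrunc f N' A' x.
Proof.
move=> NN' AA'; rewrite /Gtrunc (big_ord_widen N' (fun n => \sum_(y <- A) PO n x y * f y) NN').
rewrite big_mkcond /=; apply: ler_sum => n _.
have term_ge0 y : 0 <= PO n x y * f y by rewrite mulr_ge0 ?killedP_ge0.
case: ifP => _; last by apply: sumr_ge0.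
rewrite [X in X <= _](_ : _ = \sum_(y <- A) (if y \in A then PO n x y * f y else 0)).
  rewrite (big_fset_incl _ AA') => [|y _ /negbTE -> //].
  by apply: ler_sum => y _; case: ifP.
by rewrite big_seq_cond [RHS]big_seq_cond; apply: eq_bigr => y /andP[-> _].
Qed.

Lemma G_minimal w : (forall y, 0 <= w y) -> supersolution f w ->
  forall x, Omega x -> (G f x <= (w x)%:E)%E.
Proof.
move=> w0 wsup x _; apply: G_le_ub => N A AO; rewrite lee_fin.
elim: N x => [|N IH] x; first by rewrite /Gtrunc big_ord0.
have [Ox|Ox] := pselect (Omega x); last by rewrite Gtrunc_notin.
rewrite GtruncS //; apply: le_trans (wsup x Ox); apply: lerD.
  by case: ifP.
by apply: ler_sum => z _; rewrite ler_wpM2l ?P_ge0.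
Qed.

Lemma Gtrunc_approx x e : G f x \is a fin_num -> 0 < e ->
  exists N A, (forall y, y \in A -> Omega y) /\ fine (G f x) - e <= Gtrunc f N A x.
Proof.
move=> finG e0; apply: contrapT => noNA.
have : (G f x <= (fine (G f x) - e)%:E)%E.
  apply: G_le_ub => N A AO; rewrite lee_fin leNgt; apply/negP => lt_e.
  by apply: noNA; exists N, A; split => //; exact: ltW.
rewrite -{1}(fineK finG) lee_fin; lra.
Qed.

(* Finitely many approximations can be realised by a single truncation,
   since [Gtrunc] is monotone in [N] and [A]. *)
Lemma Gtrunc_approx_seq e (T : V -> R) (s : seq V) :
  (forall z, z \in s -> exists N A,
     (forall y, y \in A -> Omega y) /\ T z - e <= Gtrunc f N A z) ->
  exists N A, (forall y, y \in A -> Omega y) /\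
     forall z, z \in s -> T z - e <= Gtrunc f N A z.
Proof.
elim: s => [|z s IH] approx_s.
  by exists 0%N, fset0; split => // y; rewrite inE.
have [N1 [A1 [A1O le1]]] := approx_s z (mem_head _ _).
have [N2 [A2 [A2O le2]]] : exists N A, (forall y, y \in A -> Omega y) /\
    forall z, z \in s -> T z - e <= Gtrunc f N A z.
  by apply: IH => y ys; apply: approx_s; rewrite inE ys orbT.
exists (maxn N1 N2), (A1 `|` A2)%fset; split.
  by move=> y; rewrite inE => /orP[/A1O|/A2O].
move=> y; rewrite inE => /orP[/eqP ->|ys].
  by apply: le_trans le1 _; apply: le_Gtrunc; [exact: leq_maxl | exact: fsubsetUl].
by apply: le_trans (le2 y ys) _; apply: le_Gtrunc; [exact: leq_maxr | exact: fsubsetUr].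
Qed.

Lemma Gfine_supersolution : (forall z, Omega z -> G f z \is a fin_num) ->
  supersolution f (Gfine f).
Proof.
move=> finG x Ox; apply/ler_addgt0Pr => e e0.
have [N [A [AO approxA]]] : exists N A, (forall y, y \in A -> Omega y) /\
    forall z, z \in nbrs_fset x -> Gfine f z - e <= Gtrunc f N A z.
  apply: Gtrunc_approx_seq => z _; rewrite /Gfine; case: (asboolP (Omega z)) => Oz.
    exact: Gtrunc_approx (finG z Oz) e0.
  exists 0%N, fset0; split => [y|]; first by rewrite inE.
  by rewrite /Gtrunc big_ord0 sub0r oppr_le0 ltW.
have xAO y : y \in (x |` A)%fset -> Omega y by rewrite !inE => /orP[/eqP ->|/AO].
have le_G := Gtrunc_le_G N.+1 x xAO.
rewrite -(fineK (finG x Ox)) lee_fin GtruncS // fset1U1 in le_G.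
have le_nbrs : \sum_(z <- nbrs_fset x) P x z * (Gfine f z - e) <=
    \sum_(z <- nbrs_fset x) P x z * Gtrunc f N (x |` A)%fset z.
  rewrite big_seq [X in _ <= X]big_seq; apply: ler_sum => z zx.
  rewrite ler_wpM2l ?P_ge0 //; apply: le_trans (approxA z zx) _.
  by apply: le_Gtrunc => //; exact: fsubsetU1.
have sum_e : \sum_(z <- nbrs_fset x) P x z * (Gfine f z - e) =
    \sum_(z <- nbrs_fset x) P x z * Gfine f z - e.
  rewrite -[e in RHS]mul1r -(sum_P x) mulr_suml -sumrB.
  by apply: eq_bigr => z _; rewrite mulrBr.
have -> : Gfine f x = fine (G f x) by rewrite /Gfine asboolT.
lra.
Qed.

End NonnegativeSource.

Lemma green_le_G (f : V -> R) x o : (forall y, 0 <= f y) -> Omega o ->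
  (green mu Omega x o * (f o * muv mu o)%R%:E <= G f x)%E.
Proof.
move=> f0 Oo; apply: esum_ge; exists [set o]; last by rewrite fsbig_set1.
by split; [exact: finite_set1 | move=> y ->].
Qed.

Lemma G_gt0 (f : V -> R) x o : (forall y, 0 <= f y) -> Omega o -> reach mu Omega x o ->
  0 < f o -> (0 < G f x)%E.
Proof.
move=> f0 Oo xo fo; apply: lt_le_trans (green_le_G x f0 Oo).
by rewrite mule_gt0 ?green_gt0 // lte_fin mulr_gt0.
Qed.

Lemma supersolution_divr (f w : V -> R) c : 0 < c ->
  supersolution (fun x => c * f x) w -> supersolution f (fun x => w x / c).
Proof.
move=> c0 wsup x Ox; rewrite ler_pdivlMr // mulrDl mulr_suml.
under eq_bigr do rewrite -mulrA divfK ?gt_eqF //.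
by rewrite mulrC; exact: wsup.
Qed.

Lemma green_le_supersolution (f w : V -> R) o x : (forall y, 0 <= f y) -> (forall y, 0 <= w y) ->
  supersolution f w -> Omega o -> Omega x ->
  (green mu Omega x o * (f o * muv mu o)%R%:E <= (w x)%:E)%E.
Proof.
move=> f0 w0 wsup Oo Ox.
by apply: le_trans (G_minimal f0 w0 wsup Ox); exact: green_le_G.
Qed.

Lemma G_scale_le (f : V -> R) k x : (forall y, 0 <= f y) -> 0 <= k ->
  (G (fun y => k * f y)%R x <= k%:E * G f x)%E.
Proof.
move=> f0 k0; apply: G_le_ub => [y|N A AO]; first by rewrite mulr_ge0.
have -> : Gtrunc (fun y => k * f y) N A x = k * Gtrunc f N A x.
  rewrite /Gtrunc mulr_sumr; apply: eq_bigr => n _; rewrite mulr_sumr.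
  by apply: eq_bigr => y _; rewrite mulrCA.
by rewrite EFinM lee_wpmul2l ?lee_fin ?Gtrunc_le_G.
Qed.

Lemma G_dirac o x : Omega o ->
  G (fun y => if y == o then (muv mu o)^-1 else 0) x = green mu Omega x o.
Proof.
move=> Oo; have d0 y : (0 <= (if y == o then (muv mu o)^-1 else 0)%:E * (muv mu y)%:E)%E.
  rewrite -EFinM lee_fin mulr_ge0 ?(ltW (muv_gt0 y)) //.
  by case: eqP => _ //; rewrite invr_ge0; exact/ltW/muv_gt0.
rewrite /G /green_op (esumID [set o]); last by move=> y _; rewrite mule_ge0 ?green_ge0.
have -> : Omega `&` [set o] = [set o] by apply/seteqP; split => [y [] //|y ->].
rewrite esum_set1; last exact: mule_ge0 (green_ge0 _ _) (d0 o).
rewrite esum1 ?adde0; last by move=> y [_ /eqP/negbTE yo]; rewrite yo mul0e mule0.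
by rewrite eqxx -EFinM mulVf ?muv_neq0 // mule1.
Qed.

Definition greenR o x := fine (green mu Omega o x).

Lemma greenR_ge0 o x : 0 <= greenR o x.
Proof. exact/fine_ge0/green_ge0. Qed.

Lemma green_superharmonic o : Omega o ->
  (forall x, Omega x -> green mu Omega o x \is a fin_num) ->
  supersolution (fun=> 0) (greenR o).
Proof.
move=> Oo fin_g.
pose d y := if y == o then (muv mu o)^-1 else 0.
have d0 y : 0 <= d y by rewrite /d; case: eqP => _ //; rewrite invr_ge0; exact/ltW/muv_gt0.
have Gd z : Gfine d z = greenR o z.
  rewrite /Gfine /greenR; case: asboolP => Oz; first by rewrite G_dirac // green_sym.
  by rewrite green_notinr.
have fin_Gd z : Omega z -> G d z \is a fin_num by move=> Oz; rewrite G_dirac // green_sym fin_g.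
move=> x Ox; have := Gfine_supersolution d0 fin_Gd Ox.
under eq_bigr do rewrite Gd.
by rewrite Gd add0r; apply: le_trans; rewrite lerDr.
Qed.

Lemma green_op_greenRE o (s : V -> R) q x :
  (forall y, Omega y -> green mu Omega o y \is a fin_num) ->
  green_op mu Omega (fun y => (s y)%:E * green mu Omega o y `^ q)%E x =
  G (fun y => s y * greenR o y `^ q) x.
Proof.
move=> fin_g; apply: eq_esum => y Oy.
by rewrite -[green _ _ o y](fineK (fin_g y Oy)) poweR_EFin.
Qed.

Section LaneEmden.
Variables (sigma : V -> R) (q : R).
Hypotheses (sigma_ge0 : forall x, 0 <= sigma x) (q_gt1 : 1 < q).
Hypothesis Omega_connected : connected_set mu Omega.
Hypothesis sigma_pos : exists2 o, Omega o & 0 < sigma o.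

Let q_ge1 : 1 <= q := ltW q_gt1.
Let q_ge0 : 0 <= q := le_trans ler01 q_ge1.

Definition positive_supersolution w := [/\ (forall x, ~ Omega x -> w x = 0),
  (forall x, Omega x -> 0 < w x) & supersolution (fun x => sigma x * w x `^ q) w].

Definition dirichlet_sol u := (forall x, Omega x -> 0 < u x) /\
  (forall x, bdry mu Omega x -> u x = 0) /\
  (forall x, Omega x -> sigma x * u x `^ q <= - laplacian mu u x).

Definition integral_sol u := (forall x, Omega x -> 0 < u x) /\
  (forall x, Omega x ->
     (green_op mu Omega (fun y => (sigma y * u y `^ q)%:E) x <= (u x)%:E)%E).

Definition green_estimate o := exists2 C : R, 0 < C &
  forall x, Omega x ->
    (green_op mu Omega (fun y => (sigma y)%:E * green mu Omega o y `^ q) x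
       <= C%:E * green mu Omega o x)%E /\ (green mu Omega o x < +oo)%E.

Lemma positive_supersolution_dirichlet w : positive_supersolution w -> dirichlet_sol w.
Proof.
move=> [wout wpos wsup]; split => //; split; first by move=> x [/wout].
by move=> x Ox; rewrite laplacianE opprB; have := wsup x Ox; lra.
Qed.

Lemma dirichlet_integral_sol u : dirichlet_sol u -> integral_sol u.
Proof.
move=> [upos [ubdry ulap]]; split => // x Ox.
pose w y := if `[< Omega y >] then u y else 0.
have -> : u x = w x by rewrite /w (asboolT Ox).
apply: (G_minimal _ _ _ Ox) => [y|y|y Oy]; first by rewrite mulr_ge0 ?powR_ge0.
  by rewrite /w; case: asboolP => // /upos /ltW.
rewrite {2}/w (asboolT Oy).
have -> : \sum_(z <- nbrs_fset y) P y z * w z = \sum_(z <- nbrs_fset y) P y z * u z.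
  rewrite big_seq [RHS]big_seq; apply: eq_bigr => z; rewrite /w mem_nbrs_fset //.
  by case: asboolP => // Oz yz; rewrite ubdry ?mulr0 //; split => //; exists y.
by have := ulap y Oy; rewrite laplacianE opprB; lra.
Qed.

Lemma integral_sol_supersolution u : integral_sol u -> exists w, positive_supersolution w.
Proof.
move=> [upos uG]; pose f y := sigma y * u y `^ q.
have f0 y : 0 <= f y by rewrite mulr_ge0 ?powR_ge0.
have finG z : Omega z -> G f z \is a fin_num.
  by move=> Oz; rewrite ge0_fin_numE ?G_ge0 //; apply: le_lt_trans (uG z Oz) (ltry _).
have GfineE z : Omega z -> (Gfine f z)%:E = G f z.
  by move=> Oz; rewrite /Gfine (asboolT Oz) fineK ?finG.
have Gfine_ge0 z : 0 <= Gfine f z.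
  by rewrite /Gfine; case: asboolP => // _; exact/fine_ge0/G_ge0.
exists (Gfine f); split.
- by move=> x Ox; rewrite /Gfine (asboolF Ox).
- move=> x Ox; have [o Oo so] := sigma_pos.
  rewrite -lte_fin GfineE //; apply: (G_gt0 f0 Oo (Omega_connected Ox Oo)).
  by rewrite /f mulr_gt0 // powR_gt0 // upos.
- move=> x Ox; apply: le_trans (Gfine_supersolution f0 finG Ox); rewrite lerD2r.
  rewrite ler_wpM2l //; apply: (ge0_ler_powR q_ge0); rewrite ?nnegrE ?Gfine_ge0 ?(ltW (upos x Ox)) //.
  by rewrite -lee_fin GfineE //; exact: uG.
Qed.

Lemma psi_transform_supersolution w h a : positive_supersolution w -> 0 < a ->
  (forall x, 0 <= h x) -> (forall x, Omega x -> 0 < h x) -> (forall x, a * h x <= w x) ->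
  supersolution (fun=> 0) h ->
  supersolution (fun x => (q - 1) / a * (a / 2) `^ q * (sigma x * h x `^ q))
    (fun x => h x * psi q a (w x / h x)).
Proof.
move=> [_ _ wsup] a0 h0 hpos ahw hsup x Ox; rewrite mulrA.
have := hsup x Ox; rewrite add0r => hsupx.
apply: (psi_supersolution q_ge1 a0 (hpos x Ox) (ahw x) (P_ge0 x) h0 ahw hsupx (sigma_ge0 x)).
exact: wsup.
Qed.

Lemma positive_supersolution_green w o : positive_supersolution w -> Omega o -> 0 < sigma o ->
  (forall x, Omega x -> green mu Omega o x \is a fin_num) /\
  forall x, sigma o * w o `^ q * muv mu o * greenR o x <= w x.
Proof.
move=> [wout wpos wsup] Oo so.
have w0 x : 0 <= w x by have [/wpos/ltW|/wout->] := pselect (Omega x).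
have f0 x : 0 <= sigma x * w x `^ q by rewrite mulr_ge0 ?powR_ge0.
set a := sigma o * w o `^ q * muv mu o.
have a0 : 0 < a by rewrite mulr_gt0 ?mulr_gt0 ?powR_gt0 ?wpos.
have ga x : Omega x -> (green mu Omega o x * a%:E <= (w x)%:E)%E.
  by move=> Ox; rewrite green_sym; exact: green_le_supersolution f0 w0 wsup Oo Ox.
have fin_g x : Omega x -> green mu Omega o x \is a fin_num.
  move=> Ox; have := ga x Ox; have := green_ge0 o x.
  by case: (green mu Omega o x) => [r| |] //= _; rewrite gt0_mulye ?lte_fin.
split => // x; have [Ox|Ox] := pselect (Omega x); last first.
  by rewrite /greenR green_notinr // mulr0.
by rewrite -lee_fin EFinM muleC /greenR fineK ?fin_g //; exact: ga.
Qed.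

Lemma positive_supersolution_green_estimate w o : positive_supersolution w ->
  Omega o -> 0 < sigma o -> green_estimate o.
Proof.
move=> wsol Oo so; have [fin_g ah] := positive_supersolution_green wsol Oo so.
have [_ wpos _] := wsol.
set a := sigma o * w o `^ q * muv mu o in ah.
have a0 : 0 < a by rewrite mulr_gt0 ?mulr_gt0 ?powR_gt0 ?wpos.
pose h := greenR o.
have hE x : Omega x -> green mu Omega o x = (h x)%:E by move=> Ox; rewrite fineK ?fin_g.
have hpos x : Omega x -> 0 < h x.
  by move=> Ox; rewrite -lte_fin -hE //; exact/green_gt0/Omega_connected.
have h0 x : 0 <= h x := greenR_ge0 o x.
have w0 x : 0 <= w x := le_trans (mulr_ge0 (ltW a0) (h0 x)) (ah x).
pose c := (q - 1) / a * (a / 2) `^ q.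
have c0 : 0 < c by rewrite mulr_gt0 ?powR_gt0 ?divr_gt0 // subr_gt0.
pose v x := h x * psi q a (w x / h x).
have vsup : supersolution (fun x => sigma x * h x `^ q) (fun x => v x / c).
  apply: supersolution_divr c0 _.
  exact: psi_transform_supersolution wsol a0 h0 hpos ah (green_superharmonic Oo fin_g).
have v_le_h x : v x <= h x.
  by rewrite -[leRHS]mulr1 ler_wpM2l // psi_le1 // divr_ge0.
exists c^-1; first by rewrite invr_gt0.
move=> x Ox; split; last by rewrite hE // ltry.
rewrite green_op_greenRE // hE // -EFinM mulrC.
apply: le_trans (G_minimal _ _ vsup Ox) _.
- by move=> y; rewrite mulr_ge0 ?powR_ge0.
- by move=> y; rewrite divr_ge0 ?(ltW c0) // mulr_ge0 ?psi_ge0 ?divr_ge0.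
- by rewrite lee_fin ler_pM2r ?invr_gt0.
Qed.

Lemma green_estimate_integral_sol o : Omega o -> green_estimate o -> exists u, integral_sol u.
Proof.
move=> Oo [C C0 estC].
pose h := greenR o.
have fin_g x : Omega x -> green mu Omega o x \is a fin_num.
  by move=> Ox; rewrite ge0_fin_numE ?green_ge0 // (estC x Ox).2.
have hE x : Omega x -> green mu Omega o x = (h x)%:E by move=> Ox; rewrite fineK ?fin_g.
have hpos x : Omega x -> 0 < h x.
  by move=> Ox; rewrite -lte_fin -hE //; exact/green_gt0/Omega_connected.
(* [lam * h] solves (II) as soon as [lam ^ q * C <= lam]; take equality. *)
pose lam := C^-1 `^ (q - 1)^-1.
have lam0 : 0 < lam by rewrite powR_gt0 // invr_gt0.
have lamq : lam `^ q * C = lam.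
  have -> : q = q - 1 + 1 by ring.
  rewrite powRD; last by apply/implyP => _; rewrite gt_eqF.
  rewrite powRr1 ?ltW // /lam -powRrM mulVf ?powRr1 ?invr_ge0 ?ltW //.
    by rewrite mulrAC mulVf ?gt_eqF // mul1r.
  by rewrite subr_eq0 gt_eqF.
exists (fun x => lam * h x); split => [x Ox|x Ox]; first by rewrite mulr_gt0 ?hpos.
have -> : (fun y => (sigma y * (lam * h y) `^ q)%:E) =
    (fun y => (lam `^ q * (sigma y * h y `^ q))%:E).
  apply/funext => y; rewrite powRM ?(ltW lam0) ?greenR_ge0 //; congr EFin; ring.
have f0 y : 0 <= sigma y * h y `^ q by rewrite mulr_ge0 ?powR_ge0.
apply: le_trans (G_scale_le x f0 (powR_ge0 lam q)) _.
rewrite -green_op_greenRE //; apply: le_trans (lee_wpmul2l _ (estC x Ox).1) _.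
  by rewrite lee_fin powR_ge0.
by rewrite hE // -!EFinM mulrA lamq.
Qed.

Lemma lane_emden_equiv : [/\ (exists u, dirichlet_sol u) <-> (exists u, integral_sol u),
  (exists u, integral_sol u) <-> (exists o, [/\ Omega o, 0 < sigma o & green_estimate o]) &
  (exists o, [/\ Omega o, 0 < sigma o & green_estimate o]) <->
  (forall o, Omega o -> 0 < sigma o -> green_estimate o)].
Proof.
have [o Oo so] := sigma_pos.
have estimate_all u : integral_sol u -> forall o, Omega o -> 0 < sigma o -> green_estimate o.
  move=> /integral_sol_supersolution [w wsol] o' Oo' so'.
  exact: positive_supersolution_green_estimate wsol Oo' so'.
split; split.
- by move=> [u /dirichlet_integral_sol]; exists u.
- move=> [u /integral_sol_supersolution [w /positive_supersolution_dirichlet]].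
  by exists w.
- by move=> [u /estimate_all est_u]; exists o; split => //; exact: est_u.
- by move=> [o' [Oo' _ /(green_estimate_integral_sol Oo')]].
- by move=> [o' [Oo' _ /(green_estimate_integral_sol Oo') [u /estimate_all]]].
- by move=> est; exists o; split => //; exact: est.
Qed.

End LaneEmden.
End KilledWalk.

Lemma connected_muv_gt0 (R : realType) (V : countType) (mu : V -> V -> R) :
  (forall x y, 0 <= mu x y) -> locally_finite mu ->
  infinite_set [set: V] -> connected_set mu [set: V] -> forall x, 0 < muv mu x.
Proof.
move=> mu_ge0 mu_lf V_inf V_conn x.
have [y yx] : exists y, y != x.
  apply: contrapT => all_x; apply: V_inf.
  suff -> : [set: V] = [set x] by exact: finite_set1.
  apply/seteqP; split => // y _ /=; apply: contrapT => yx.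
  by apply: all_x; exists y; apply/eqP.
have [z xz] : exists z, 0 < mu x z.
  move: (V_conn x y I I) yx.
  by case=> [z _|z w z' _ zw _]; [rewrite eqxx | exists w].
rewrite /muv fsbig_finite; last exact: mu_lf.
rewrite (bigD1_seq z) ?fset_uniq //=; first by rewrite ltr_wpDr // sumr_ge0.
by rewrite in_fset_set; [exact: mem_set | exact: mu_lf].
Qed.

Theorem theorem1p1 (R : realType) (V : countType) (mu : V -> V -> R)
  (Omega : set V) (sigma : V -> R) (q : R) :
  weighted_graph mu -> locally_finite mu ->
  infinite_set [set: V] -> connected_set mu [set: V] ->
  connected_set mu Omega ->
  (Omega != [set: V] \/ ~ parabolic mu) ->
  (forall x, 0 <= sigma x) -> (forall x, ~ Omega x -> sigma x = 0) ->
  (exists2 x, Omega x & sigma x != 0) ->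
  1 < q ->
  let I := exists u : V -> R,
      (forall x, Omega x -> 0 < u x) /\
      (forall x, bdry mu Omega x -> u x = 0) /\
      (forall x, Omega x -> sigma x * u x `^ q <= - laplacian mu u x) in
  let II := exists u : V -> R,
      (forall x, Omega x -> 0 < u x) /\
      (forall x, Omega x ->
         (green_op mu Omega (fun y => (sigma y * u y `^ q)%:E) x <= (u x)%:E)%E) in
  let III o := exists2 C : R, 0 < C &
      forall x, Omega x ->
        (green_op mu Omega (fun y => (sigma y)%:E * green mu Omega o y `^ q) x
           <= C%:E * green mu Omega o x)%E /\
        (green mu Omega o x < +oo)%E in
  [/\ I <-> II,
      II <-> (exists o, [/\ Omega o, 0 < sigma o & III o]) &
      (exists o, [/\ Omega o, 0 < sigma o & III o]) <->
      (forall o, Omega o -> 0 < sigma o -> III o)].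
Proof.
move=> [mu_ge0 mu_sym] mu_lf V_inf V_conn Omega_conn _ sigma_ge0 _ [o Oo so] q_gt1.
have muv_gt0 := connected_muv_gt0 mu_ge0 mu_lf V_inf V_conn.
have sigma_pos : exists2 o, Omega o & 0 < sigma o.
  by exists o; rewrite // lt_def so sigma_ge0.
exact: (lane_emden_equiv mu_ge0 mu_sym mu_lf muv_gt0 sigma_ge0 q_gt1 Omega_conn sigma_pos).
Qed.
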